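(* Let $R$ be a Noetherian ring and let $R_0$ be an elementary substructure of $R$ (in the language of rings). Then $R_0$ is Noetherian.
   Context: Rings are commutative and unital. *)

From HB Require Import structures.
From mathcomp Require Import all_boot all_algebra.
Set Implicit Arguments. Unset Strict Implicit. Unset Printing Implicit Defensive.
Import GRing.Theory.
Local Open Scope ring_scope.

Inductive rterm : Type :=
  | RVar of nat
  | RZero
  | ROne
  | RAdd of rterm & rterm
  | ROpp of rterm
  | RMul of rterm & rterm.

Inductive rformula : Type :=
  | FTrue
  | FFalse
  | FEq of rterm & rterm
  | FNot of rformula
  | FAnd of rformula & rformula
  | FOr of rformula & rformula
  | FImp of rformula & rformula
  | FExists of nat & rformula
  | FForall of nat & rformula.

Definition upd (R : Type) (e : nat -> R) (i : nat) (x : R) : nat -> R :=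
  fun j => if j == i then x else e j.

Fixpoint reval (R : comPzRingType) (e : nat -> R) (t : rterm) : R :=
  match t with
  | RVar i => e i
  | RZero => 0
  | ROne => 1
  | RAdd t1 t2 => reval e t1 + reval e t2
  | ROpp t1 => - reval e t1
  | RMul t1 t2 => reval e t1 * reval e t2
  end.

Fixpoint rholds (R : comPzRingType) (e : nat -> R) (f : rformula) : Prop :=
  match f with
  | FTrue => True
  | FFalse => False
  | FEq t1 t2 => reval e t1 = reval e t2
  | FNot g => ~ rholds e g
  | FAnd g h => rholds e g /\ rholds e h
  | FOr g h => rholds e g \/ rholds e h
  | FImp g h => rholds e g -> rholds e h
  | FExists i g => exists x : R, rholds (upd e i x) g
  | FForall i g => forall x : R, rholds (upd e i x) g
  end.

(* R0 is (identified via the injective ring morphism f with) an elementary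
   substructure of R. *)
Definition elementary_embedding (R0 R : comPzRingType) (f : R0 -> R) : Prop :=
  forall (phi : rformula) (e : nat -> R0), rholds e phi <-> rholds (f \o e) phi.

Definition is_ideal (R : comPzRingType) (I : R -> Prop) : Prop :=
  [/\ I 0,
      (forall x y, I x -> I y -> I (x + y)) &
      (forall r x, I x -> I (r * x))].

Definition noetherian (R : comPzRingType) : Prop :=
  forall I : nat -> R -> Prop,
    (forall n, is_ideal (I n)) ->
    (forall n x, I n x -> I n.+1 x) ->
    exists N, forall n, (N <= n)%N -> forall x, I n x <-> I N x.

(* For an ascending chain (I_n) of ideals of R0, the extended ideals R f(I_n)
   of R stabilise at some N. If x lies in I_n with n >= N, then f x is an
   R-linear combination of images of finitely many a_i in I_N. "The first
   element is a linear combination of the others" is a first-order formula,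
   so by elementarity x is an R0-linear combination of the a_i, hence x lies
   in I_N. *)
From HB Require Import structures.
From mathcomp Require Import all_boot all_algebra.
From mathcomp Require Import zify.
Set Implicit Arguments. Unset Strict Implicit. Unset Printing Implicit Defensive.
Import GRing.Theory.
Local Open Scope ring_scope.

Lemma upd_eq (T : Type) (e : nat -> T) i x : upd e i x i = x.
Proof. by rewrite /upd eqxx. Qed.

Lemma upd_neq (T : Type) (e : nat -> T) i x j : j != i -> upd e i x j = e j.
Proof. by move=> /negbTE ji; rewrite /upd ji. Qed.

(* Variable 3k is the combination and variable 3i+1 the i-th generator;
   the i-th coefficient is bound to 3i+2, and 3i carries the partial sum
   over the first i generators. *)
Fixpoint span_formula (k : nat) : rformula :=
  match k with
  | 0 => FEq (RVar 0) RZero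
  | k.+1 => FExists (3 * k + 2) (FExists (3 * k)
      (FAnd (span_formula k)
            (FEq (RVar (3 * k.+1))
                 (RAdd (RMul (RVar (3 * k + 2)) (RVar (3 * k + 1))) (RVar (3 * k))))))
  end.

Lemma span_formulaP (R : comPzRingType) k (e : nat -> R) :
  rholds e (span_formula k) <->
  exists c : nat -> R, e (3 * k)%N = \sum_(i < k) c i * e (3 * i + 1)%N.
Proof.
elim: k e => [|k IH] e /=.
  rewrite muln0; split=> [e0|[c]]; last by rewrite big_ord0.
  by exists (fun=> 0); rewrite e0 big_ord0.
pose e' r z := upd (upd e (3 * k + 2) r) (3 * k) z.
have e'_gen r z i : (i <= k)%N -> e' r z (3 * i + 1)%N = e (3 * i + 1)%N.
  by move=> ik; rewrite /e' !upd_neq //; lia.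
have e'_last r z : e' r z (3 * k.+1)%N = e (3 * k.+1)%N.
  by rewrite /e' !upd_neq //; lia.
have e'_coef r z : e' r z (3 * k + 2)%N = r by rewrite /e' upd_neq ?upd_eq //; lia.
have e'_sum r z : e' r z (3 * k)%N = z by rewrite /e' upd_eq.
have sum_e' r z (c : nat -> R) :
    \sum_(i < k) c i * e' r z (3 * i + 1)%N = \sum_(i < k) c i * e (3 * i + 1)%N.
  by apply: eq_bigr => i _; rewrite e'_gen // ltnW.
split.
- case=> r [z []]; rewrite -/(e' r z) => /IH [c].
  rewrite (e'_sum r z) sum_e' (e'_last r z) (e'_coef r z) (e'_gen r z k (leqnn k)).
  move=> zE ->.
  exists (upd c k r); rewrite big_ord_recr /= upd_eq addrC zE.
  by congr (_ + _); apply: eq_bigr => i _; rewrite upd_neq // neq_ltn ltn_ord.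
- case=> c; rewrite big_ord_recr /= => eE.
  exists (c k), (\sum_(i < k) c i * e (3 * i + 1)%N); rewrite -/(e' _ _); split.
    by apply/IH; exists c; rewrite e'_sum sum_e'.
  by rewrite e'_last e'_coef (e'_gen _ _ k (leqnn k)) e'_sum eE addrC.
Qed.

Lemma elementary_reflect_span (R0 R : comPzRingType) (f : R0 -> R)
    k (a : nat -> R0) (x : R0) :
  elementary_embedding f ->
  (exists c : nat -> R, f x = \sum_(i < k) c i * f (a i)) ->
  exists c0 : nat -> R0, x = \sum_(i < k) c0 i * a i.
Proof.
move=> elem [c fxE].
pose e j := if j == (3 * k)%N then x else a (j %/ 3)%N.
have e_comb : e (3 * k)%N = x by rewrite /e eqxx.
have e_gen i : (i < k)%N -> e (3 * i + 1)%N = a i.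
  move=> ik; rewrite /e ifN; last by lia.
  by congr a; lia.
have : rholds (f \o e) (span_formula k).
  apply/span_formulaP; exists c; rewrite /= e_comb fxE.
  by apply: eq_bigr => i _; rewrite e_gen.
move/elem/span_formulaP=> [c0 c0E]; exists c0.
by rewrite -e_comb c0E; apply: eq_bigr => i _; rewrite e_gen.
Qed.

Lemma ideal_sum (R : comPzRingType) (I : R -> Prop) k (c a : nat -> R) :
  is_ideal I -> (forall i, (i < k)%N -> I (a i)) ->
  I (\sum_(i < k) c i * a i).
Proof.
case=> I0 ID IM aI; apply: (big_ind I) => // i _.
exact/IM/aI.
Qed.

Lemma chain_mono (T : Type) (I : nat -> T -> Prop) :
  (forall n x, I n x -> I n.+1 x) ->
  forall m n, (m <= n)%N -> forall x, I m x -> I n x.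
Proof.
move=> incr m n /subnK <- x; elim: (n - m)%N => //= d IH /IH.
exact: incr.
Qed.

Section Extension.
Variables (R0 R : comPzRingType) (f : R0 -> R).

Definition extension (I : R0 -> Prop) (z : R) : Prop :=
  exists l : seq (R * R0),
    (forall p, p \in l -> I p.2) /\ z = \sum_(p <- l) p.1 * f p.2.

Lemma extension_ideal I : is_ideal (extension I).
Proof.
split.
- by exists [::]; rewrite big_nil.
- move=> _ _ [l1 [l1I ->]] [l2 [l2I ->]]; exists (l1 ++ l2).
  split; last by rewrite big_cat.
  by move=> p; rewrite mem_cat => /orP [/l1I|/l2I].
- move=> r _ [l [lI ->]]; exists [seq (r * p.1, p.2) | p <- l].
  split; last by rewrite big_map mulr_sumr; apply: eq_bigr => p _; rewrite mulrA.
  by move=> _ /mapP [p /lI pI ->].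
Qed.

Lemma extension_mono (I J : R0 -> Prop) :
  (forall x, I x -> J x) -> forall z, extension I z -> extension J z.
Proof. by move=> IJ z [l [lI zE]]; exists l; split=> // p /lI/IJ. Qed.

Lemma extension_mem (I : R0 -> Prop) x : I x -> extension I (f x).
Proof.
move=> Ix; exists [:: (1, x)]; split; last by rewrite big_seq1 mul1r.
by move=> p; rewrite inE => /eqP ->.
Qed.

Lemma extension_nth (I : R0 -> Prop) z : extension I z ->
  exists k (c : nat -> R) (a : nat -> R0),
    (forall i, (i < k)%N -> I (a i)) /\ z = \sum_(i < k) c i * f (a i).
Proof.
move=> [l [lI ->]].
exists (size l), (fun i => (nth (0, 0) l i).1), (fun i => (nth (0, 0) l i).2).
split; first by move=> i il; apply/lI/mem_nth.
by rewrite (big_nth (0, 0)) big_mkord.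
Qed.

End Extension.

Theorem proposition7p12 (R0 R : comPzRingType) (f : {rmorphism R0 -> R}) :
  injective f -> elementary_embedding f -> noetherian R -> noetherian R0.
Proof.
move=> _ elem noethR I Iideal Iincr.
have [N stable] := noethR (fun n => extension f (I n))
  (fun n => extension_ideal f (I n)) (fun n => extension_mono (Iincr n)).
exists N => n leNn x; split; last exact: chain_mono.
move=> /(extension_mem f) /(stable n leNn) /extension_nth [k [c [a [aI fxE]]]].
have [c0 ->] := elementary_reflect_span elem (ex_intro _ c fxE).
exact: ideal_sum (Iideal N) aI.
Qed.
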